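(* Let $B>0$ and $c>0$, and set $\epsilon^*(B)=\dfrac{c\,e^{-c/2}}{1+B}$. Let $\beta$ be Lipschitz on $[0,1]$ with $\|\beta\|_\infty\le B$, let $k=\mathcal{K}(\beta)$ be the exact backstepping kernel, and let $\hat k\in C^0[0,1]$ satisfy $|k(x)-\hat k(x)|<\epsilon$ for all $x\in[0,1]$, where $\epsilon\in(0,\epsilon^* )$. Put $\tilde k=k-\hat k$ and $\delta(x)=-\tilde k(x)+\int_0^x\beta(x-y)\tilde k(y)\,dy$. Then along solutions $\hat w$ of $$\hat w_t(x,t)=\hat w_x(x,t)+\delta(x)\hat w(0,t),\quad x\in[0,1],\qquad \hat w(1,t)=0,$$ the functional $V(t)=\int_0^1 e^{cx}\hat w^2(x,t)\,dx$ satisfies $V(t)\le V(0)e^{-c^*t}$ for all $t\ge0$, where $$c^* = c-\frac{e^c}{c}\epsilon^2(1+B)^2>0.$$ Moreover, the required accuracy $\epsilon^*$ is maximized over $c>0$ at $c=2$, where $\epsilon^*(B)=\dfrac{2}{e(1+B)}$.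
   Context: The backstepping kernel operator $\mathcal{K}$ maps $\beta\in C^0[0,1]$ to the solution $k$ of $k(x)=-\beta(x)+\int_0^x\beta(x-y)k(y)\,dy$, $x\in[0,1]$. $\|\cdot\|_\infty$ is the supremum norm on $[0,1]$. (The target system arises from the plant $u_t=u_x+\beta(x)u(0,t)$, $u(1,t)=\int_0^1\hat k(1-y)u(y,t)dy$ via $\hat w=u-\int_0^x\hat k(x-y)u(y)dy$.) *)

From Stdlib Require Import Reals.
From Coquelicot Require Import Coquelicot.
Open Scope R_scope.

Definition sup_le_on01 (f : R -> R) (B : R) : Prop :=
  forall x, 0 <= x <= 1 -> Rabs (f x) <= B.

Definition lipschitz_on01 (f : R -> R) : Prop :=
  exists L, forall x y, 0 <= x <= 1 -> 0 <= y <= 1 ->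
    Rabs (f x - f y) <= L * Rabs (x - y).

(* continuity on [0,1] (functions are total on R) *)
Definition cont_on01 (f : R -> R) : Prop :=
  forall x, continuous f x.

Definition is_bs_kernel (beta k : R -> R) : Prop :=
  cont_on01 k /\
  forall x, 0 <= x <= 1 ->
    k x = - beta x + RInt (fun y => beta (x - y) * k y) 0 x.

Definition delta_fun (beta k khat : R -> R) (x : R) : R :=
  - (k x - khat x) + RInt (fun y => beta (x - y) * (k y - khat y)) 0 x.

Definition eps_star (c B : R) : R := c * exp (- c / 2) / (1 + B).

Definition c_star (c B eps : R) : R := c - exp c / c * eps ^ 2 * (1 + B) ^ 2.

Definition C1_2d (w : R -> R -> R) : Prop :=
  (forall x t, ex_derive (fun y => w y t) x) /\
  (forall x t, ex_derive (fun s => w x s) t) /\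
  (forall x t, continuity_2d_pt w x t) /\
  (forall x t, continuity_2d_pt (fun x' t' => Derive (fun y => w y t') x') x t) /\
  (forall x t, continuity_2d_pt (fun x' t' => Derive (fun s => w x' s) t') x t).

Definition is_target_solution (delta : R -> R) (w : R -> R -> R) : Prop :=
  C1_2d w /\
  (forall x t, 0 <= x <= 1 -> 0 <= t ->
     Derive (fun s => w x s) t = Derive (fun y => w y t) x + delta x * w 0 t) /\
  (forall t, 0 <= t -> w 1 t = 0).

Definition Vfun (c : R) (w : R -> R -> R) (t : R) : R :=
  RInt (fun x => exp (c * x) * (w x t) ^ 2) 0 1.

From Stdlib Require Import Reals Lra Psatz.
From Coquelicot Require Import Coquelicot.
Open Scope R_scope.

(* Integrating by parts and using w(1,t) = 0, the weighted energy satisfies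
   V' = - w(0,t)^2 - c V + 2 int_0^1 e^{cx} w delta w(0,t).  Since |k - khat| < eps and
   |beta| <= B, |delta| <= eps (1 + B), and Young's inequality, with the weight chosen so that
   the w(0,t)^2 terms cancel, gives V' <= -(c - (e^c - 1)/c eps^2 (1 + B)^2) V <= - c^* V;
   Gronwall then yields the decay.  The bound c e^{-c/2} <= 2/e behind the optimality of c = 2
   is exp u >= 1 + u at u = c/2 - 1. *)

(* The [Ropp] and [Rmult a] cases catch eta-reduced forms of [fun y => - y], [fun y => a * y]. *)
Ltac continuous_R :=
  repeat match goal with
  | |- continuous (fun _ => ?a) _ => apply continuous_const
  | |- continuous (fun x => x) _ => apply continuous_id
  | |- continuous (fun _ => exp _) _ => apply continuous_exp_comp
  | |- continuous (fun _ => _ + _) _ => apply (continuous_plus (V := R_NormedModule))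
  | |- continuous (fun _ => _ - _) _ => apply (continuous_plus (V := R_NormedModule))
  | |- continuous (fun _ => - _) _ => apply (continuous_opp (V := R_NormedModule))
  | |- continuous Ropp _ => apply (continuous_opp (V := R_NormedModule) (fun y => y))
  | |- continuous (Rmult ?a) _ => apply (continuous_mult (K := R_AbsRing) (fun _ => a) (fun y => y))
  | |- continuous (fun _ => _ * _) _ => apply (continuous_mult (K := R_AbsRing))
  | |- continuous (fun _ => _ / _) _ => apply (continuous_mult (K := R_AbsRing))
  | |- continuous (fun _ => _ ^ 2) _ => simpl pow; apply (continuous_mult (K := R_AbsRing))
  | |- _ => solve [auto]
  end.

Lemma continuous_of_continuity_2d_pt f x t :
  continuity_2d_pt f x t -> continuous (fun y => f y t) x.
Proof.
  intros H. apply filterlim_locally. intros eps.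
  destruct (H eps) as [d Hd].
  exists d. intros y Hy. apply Hd; [exact Hy|].
  rewrite Rminus_eq_0, Rabs_R0. apply cond_pos.
Qed.

Lemma continuity_2d_pt_swap f x t :
  continuity_2d_pt f x t -> continuity_2d_pt (fun u v => f v u) t x.
Proof.
  intros H eps. destruct (H eps) as [d Hd]. exists d. intros u v Hu Hv. now apply Hd.
Qed.

Lemma continuous_of_lipschitz f L z :
  (forall a b, Rabs (f a - f b) <= L * Rabs (a - b)) -> continuous f z.
Proof.
  intros Hf. apply filterlim_locally. intros eps.
  assert (HL : 0 < Rabs L + 1) by (pose proof (Rabs_pos L); lra).
  assert (Hd : 0 < eps / (Rabs L + 1)) by (apply Rdiv_lt_0_compat; [apply cond_pos|lra]).
  exists (mkposreal _ Hd). intros y Hy.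
  change (Rabs (f y - f z) < eps).
  change (Rabs (y - z) < eps / (Rabs L + 1)) in Hy.
  assert (Hlt : (Rabs L + 1) * Rabs (y - z) < eps).
  { apply (Rmult_lt_compat_l (Rabs L + 1)) in Hy; [|lra].
    replace ((Rabs L + 1) * (eps / (Rabs L + 1))) with (pos eps) in Hy by (field; lra).
    exact Hy. }
  pose proof (Hf y z). pose proof (Rabs_pos (y - z)). pose proof (Rle_abs L).
  nra.
Qed.

(* [continuous] at the endpoints of [0,1] looks at values outside [0,1], where a function
   that is only Lipschitz on [0,1] is unconstrained; composing with [clamp01] removes them. *)
Definition clamp01 (z : R) : R := Rmax 0 (Rmin 1 z).

Lemma clamp01_in01 z : 0 <= clamp01 z <= 1.
Proof. unfold clamp01, Rmax, Rmin. repeat destruct Rle_dec; lra. Qed.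

Lemma clamp01_id z : 0 <= z <= 1 -> clamp01 z = z.
Proof. intros. unfold clamp01, Rmax, Rmin. repeat destruct Rle_dec; lra. Qed.

Lemma clamp01_lipschitz a b : Rabs (clamp01 a - clamp01 b) <= Rabs (a - b).
Proof.
  unfold clamp01, Rmax, Rmin. repeat destruct Rle_dec; unfold Rabs; repeat destruct Rcase_abs; lra.
Qed.

Lemma lipschitz_on01_continuous_clamp01 f z :
  lipschitz_on01 f -> continuous (fun y => f (clamp01 y)) z.
Proof.
  intros [L HL]. apply continuous_of_lipschitz with (Rabs L). intros a b.
  pose proof (HL _ _ (clamp01_in01 a) (clamp01_in01 b)).
  pose proof (clamp01_lipschitz a b). pose proof (Rabs_pos (clamp01 a - clamp01 b)).
  pose proof (Rle_abs L). pose proof (Rabs_pos L).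
  nra.
Qed.

Lemma ex_RInt_convolution01 beta g x :
  lipschitz_on01 beta -> (forall z, continuous g z) -> 0 <= x <= 1 ->
  ex_RInt (fun y => beta (x - y) * g y) 0 x.
Proof.
  intros Hbeta Hg Hx.
  apply ex_RInt_ext with (fun y => beta (clamp01 (x - y)) * g y).
  { rewrite Rmin_left, Rmax_right by lra. intros y Hy. rewrite clamp01_id; lra. }
  apply (ex_RInt_continuous (V := R_CompleteNormedModule)). intros z _. continuous_R.
  apply (continuous_comp (fun y => x - y) (fun u => beta (clamp01 u))).
  - continuous_R.
  - now apply lipschitz_on01_continuous_clamp01.
Qed.

Lemma delta_fun_bound B eps beta k khat x :
  lipschitz_on01 beta -> sup_le_on01 beta B -> cont_on01 k -> cont_on01 khat ->
  (forall y, 0 <= y <= 1 -> Rabs (k y - khat y) <= eps) -> 0 <= x <= 1 ->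
  Rabs (delta_fun beta k khat x) <= eps * (1 + B).
Proof.
  intros Hbeta Hsup Hk Hkhat Hclose Hx.
  assert (HBeps : 0 <= B * eps).
  { pose proof (Hsup 0 ltac:(lra)). pose proof (Hclose 0 ltac:(lra)).
    pose proof (Rabs_pos (beta 0)). pose proof (Rabs_pos (k 0 - khat 0)). nra. }
  assert (Hint : Rabs (RInt (fun y => beta (x - y) * (k y - khat y)) 0 x) <= (x - 0) * (B * eps)).
  { apply abs_RInt_le_const; [lra | |].
    - apply ex_RInt_convolution01; [assumption | | assumption].
      intro z. continuous_R.
    - intros y Hy. rewrite Rabs_mult.
      apply Rmult_le_compat; try apply Rabs_pos; [apply Hsup | apply Hclose]; lra. }
  unfold delta_fun.
  eapply Rle_trans; [apply Rabs_triang|]. rewrite Rabs_Ropp.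
  pose proof (Hclose x Hx). nra.
Qed.

Lemma is_derive_Vfun c w t : C1_2d w ->
  is_derive (Vfun c w) t
    (RInt (fun x => exp (c * x) * (2 * w x t * Derive (fun s => w x s) t)) 0 1).
Proof.
  intros [Hwx [Hwt [Hw [_ Hwtt]]]].
  assert (Hdt : forall x s, Derive (fun u => exp (c * x) * w x u ^ 2) s
                            = exp (c * x) * (2 * w x s * Derive (fun u => w x u) s)).
  { intros x s. apply is_derive_unique. auto_derive; [apply Hwt | ring]. }
  unfold Vfun.
  rewrite (RInt_ext _ (fun x => Derive (fun u => exp (c * x) * w x u ^ 2) t))
    by (intros x _; now rewrite Hdt).
  apply (is_derive_RInt_param (fun s x => exp (c * x) * w x s ^ 2)).
  - apply filter_forall. intros s x _. auto_derive. apply Hwt.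
  - intros x _.
    apply continuity_2d_pt_ext
      with (fun s y => exp (c * y) * (2 * w y s * Derive (fun u => w y u) s)).
    { intros s y. now rewrite Hdt. }
    repeat apply continuity_2d_pt_mult.
    + apply continuity_1d_2d_pt_comp with (g := fun _ y => c * y).
      * apply continuity_pt_filterlim, continuous_exp.
      * apply continuity_2d_pt_mult; [apply continuity_2d_pt_const | apply continuity_2d_pt_id2].
    + apply continuity_2d_pt_const.
    + apply (continuity_2d_pt_swap w), Hw.
    + apply (continuity_2d_pt_swap (fun y s => Derive (fun u => w y u) s)), Hwtt.
  - apply filter_forall. intros s.
    apply (ex_RInt_continuous (V := R_CompleteNormedModule)). intros x _.
    apply (ex_derive_continuous (V := R_NormedModule)). auto_derive. apply Hwx.
Qed.

Lemma is_RInt_exp_mul_square_derive c (f : R -> R) :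
  (forall x, ex_derive f x) -> (forall x, continuous (Derive f) x) ->
  is_RInt (fun x => c * exp (c * x) * f x ^ 2 + exp (c * x) * (2 * f x * Derive f x)) 0 1
    (exp c * f 1 ^ 2 - f 0 ^ 2).
Proof.
  intros Hf Hdf.
  assert (Hcf : forall x, continuous f x)
    by (intro x; now apply (ex_derive_continuous (V := R_NormedModule))).
  replace (exp c * f 1 ^ 2 - f 0 ^ 2)
    with (minus (exp (c * 1) * f 1 ^ 2) (exp (c * 0) * f 0 ^ 2))
    by (unfold minus, plus, opp; simpl; rewrite Rmult_0_r, Rmult_1_r, exp_0; ring).
  apply (is_RInt_derive (V := R_CompleteNormedModule) (fun y => exp (c * y) * f y ^ 2)).
  - intros x _. auto_derive; [apply Hf |].
    change (Derive (fun y => f y) x) with (Derive f x). ring.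
  - intros x _. continuous_R.
Qed.

Lemma is_RInt_exp_mul c : c <> 0 -> is_RInt (fun x => exp (c * x)) 0 1 ((exp c - 1) / c).
Proof.
  intros Hc.
  replace ((exp c - 1) / c) with (minus (exp (c * 1) / c) (exp (c * 0) / c))
    by (unfold minus, plus, opp; simpl; rewrite Rmult_0_r, Rmult_1_r, exp_0; field; exact Hc).
  apply (is_RInt_derive (V := R_CompleteNormedModule) (fun y => exp (c * y) / c)).
  - intros x _. auto_derive; [exact I | field; exact Hc].
  - intros x _. continuous_R.
Qed.

Lemma young_mul_le a b d D q : 0 < q -> Rabs d <= D ->
  2 * a * d * b <= D ^ 2 / q * a ^ 2 + q * b ^ 2.
Proof.
  intros Hq Hd.
  assert (Hd2 : d ^ 2 <= D ^ 2).
  { rewrite <- (pow2_abs d). pose proof (Rabs_pos d). apply pow_incr; lra. }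
  assert (Hsq : 0 <= (d * a - q * b) ^ 2) by apply pow2_ge_0.
  apply Rmult_le_reg_l with q; [exact Hq|].
  replace (q * (D ^ 2 / q * a ^ 2 + q * b ^ 2)) with (D ^ 2 * a ^ 2 + (q * b) ^ 2) by (field; lra).
  nra.
Qed.

Lemma is_RInt_Vfun c w t : (forall x, continuous (fun y => w y t) x) ->
  is_RInt (fun x => exp (c * x) * w x t ^ 2) 0 1 (Vfun c w t).
Proof.
  intros Hw.
  apply (RInt_correct (V := R_CompleteNormedModule)).
  apply (ex_RInt_continuous (V := R_CompleteNormedModule)).
  intros x _. continuous_R.
Qed.

Lemma Vfun_ge0 c w t : (forall x, continuous (fun y => w y t) x) -> 0 <= Vfun c w t.
Proof.
  intros Hw.
  apply RInt_ge_0; [lra | eexists; exact (is_RInt_Vfun c w t Hw) |].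
  intros x _. pose proof (exp_pos (c * x)). pose proof (pow2_ge_0 (w x t)). nra.
Qed.

Lemma Vfun_dissipation c D delta w t : 0 < c ->
  (forall x, 0 <= x <= 1 -> Rabs (delta x) <= D) ->
  is_target_solution delta w -> 0 <= t ->
  RInt (fun x => exp (c * x) * (2 * w x t * Derive (fun s => w x s) t)) 0 1
    <= - (c - exp c / c * D ^ 2) * Vfun c w t.
Proof.
  intros Hc Hdelta [[Hwx [Hwt [Hw [Hwxx Hwtt]]]] [Hpde Hbc]] Ht.
  assert (Hexp : 1 < exp c) by (pose proof (exp_ineq1_le c); lra).
  (* [q] normalises the weight, [q * int_0^1 e^{cx} dx = 1];
     [M q = D^2] is the trade-off in Young's inequality. *)
  set (q := c / (exp c - 1)).
  assert (Hq : 0 < q) by (apply Rdiv_lt_0_compat; lra).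
  set (M := D ^ 2 / q).
  assert (cW : forall x, continuous (fun y => w y t) x)
    by (intro x; apply (ex_derive_continuous (V := R_NormedModule)), Hwx).
  assert (cWx : forall x, continuous (Derive (fun y => w y t)) x)
    by (intro x; apply (continuous_of_continuity_2d_pt (fun y s => Derive (fun z => w z s) y)),
        Hwxx).
  assert (cWt : forall x, continuous (fun y => Derive (fun s => w y s) t) x)
    by (intro x; apply (continuous_of_continuity_2d_pt (fun y s => Derive (fun u => w y u) s)),
        Hwtt).
  assert (HV := is_RInt_Vfun c w t cW).
  assert (HV0 := Vfun_ge0 c w t cW).
  assert (Hparts := is_RInt_exp_mul_square_derive c (fun y => w y t) (fun x => Hwx x t) cWx).
  cbv beta in Hparts. rewrite Hbc in Hparts by lra.
  replace (exp c * 0 ^ 2 - w 0 t ^ 2) with (- w 0 t ^ 2) in Hparts by ring.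
  assert (Hweight : is_RInt (fun x => q * exp (c * x)) 0 1 (q * ((exp c - 1) / c)))
    by exact (is_RInt_scal _ _ _ q _ (is_RInt_exp_mul c ltac:(lra))).
  replace (q * ((exp c - 1) / c)) with 1 in Hweight by (unfold q; field; lra).
  set (bound := fun x =>
    (c * exp (c * x) * w x t ^ 2 + exp (c * x) * (2 * w x t * Derive (fun y => w y t) x))
    + ((M - c) * (exp (c * x) * w x t ^ 2) + w 0 t ^ 2 * (q * exp (c * x)))).
  assert (Hbound : is_RInt bound 0 1 (- w 0 t ^ 2 + ((M - c) * Vfun c w t + w 0 t ^ 2 * 1)))
    by exact (is_RInt_plus _ _ _ _ _ _ Hparts
               (is_RInt_plus _ _ _ _ _ _ (is_RInt_scal _ _ _ (M - c) _ HV)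
                  (is_RInt_scal _ _ _ (w 0 t ^ 2) _ Hweight))).
  apply Rle_trans with (RInt bound 0 1).
  - apply RInt_le; [lra | | eexists; exact Hbound |].
    + apply (ex_RInt_continuous (V := R_CompleteNormedModule)). intros x _. continuous_R.
    + intros x Hx. unfold bound. rewrite Hpde by lra.
      pose proof (young_mul_le (w x t) (w 0 t) (delta x) D q Hq (Hdelta x ltac:(lra)))
        as Hyoung.
      fold M in Hyoung. pose proof (exp_pos (c * x)). nra.
  - rewrite (is_RInt_unique bound 0 1 _ Hbound).
    assert (HM : M <= exp c / c * D ^ 2).
    { unfold M, q.
      replace (D ^ 2 / (c / (exp c - 1))) with ((exp c - 1) / c * D ^ 2) by (field; lra).
      apply Rmult_le_compat_r; [apply pow2_ge_0 |].
      unfold Rdiv. apply Rmult_le_compat_r; [apply Rlt_le, Rinv_0_lt_compat |]; lra. }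
    nra.
Qed.

Lemma decay_of_differential_inequality (V dV : R -> R) a :
  (forall t, is_derive V t (dV t)) ->
  (forall t, 0 <= t -> dV t <= - a * V t) ->
  forall t, 0 <= t -> V t <= V 0 * exp (- a * t).
Proof.
  intros HV Hineq t Ht.
  set (g := fun s => V s * exp (a * s)).
  assert (Hg : forall s, is_derive g s ((dV s + a * V s) * exp (a * s))).
  { intro s. unfold g. auto_derive; [eexists; apply HV |].
    change (Derive (fun x => V x) s) with (Derive V s).
    rewrite (is_derive_unique V s (dV s) (HV s)). ring. }
  destruct (MVT_gen g 0 t (fun s => (dV s + a * V s) * exp (a * s))) as [xi [Hxi Hmvt]].
  - intros s _. apply Hg.
  - intros s _. apply continuity_pt_filterlim, (ex_derive_continuous (V := R_NormedModule)).
    eexists. apply Hg.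
  - rewrite Rmin_left, Rmax_right in Hxi by lra.
    assert (Hgt : g t <= g 0).
    { cbv beta in Hmvt. pose proof (Hineq xi ltac:(lra)). pose proof (exp_pos (a * xi)).
      assert ((dV xi + a * V xi) * exp (a * xi) <= 0) by nra.
      nra. }
    unfold g in Hgt. rewrite Rmult_0_r, exp_0, Rmult_1_r in Hgt.
    replace (V t) with (V t * exp (a * t) * exp (- a * t))
      by (rewrite Rmult_assoc, <- exp_plus; replace (a * t + - a * t) with 0 by ring;
          rewrite exp_0; ring).
    apply Rmult_le_compat_r; [apply Rlt_le, exp_pos | exact Hgt].
Qed.

Lemma mul_exp_neg_half_le c : c * exp (- c / 2) <= 2 * exp (-1).
Proof.
  pose proof (exp_ineq1_le (c / 2 - 1)).
  assert (exp (c / 2 - 1) = exp (c / 2) * exp (-1)) by (rewrite <- exp_plus; f_equal; lra).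
  assert (exp (- c / 2) * exp (c / 2) = 1) by (rewrite <- exp_plus, <- exp_0; f_equal; lra).
  pose proof (exp_pos (- c / 2)). pose proof (exp_pos (-1)).
  nra.
Qed.

Lemma eps_star_le_eps_star_2 c B : -1 < B -> eps_star c B <= eps_star 2 B.
Proof.
  intros HB. unfold eps_star.
  replace (Ropp 2 / 2) with (-1) by field.
  apply Rmult_le_compat_r; [apply Rlt_le, Rinv_0_lt_compat; lra |].
  apply mul_exp_neg_half_le.
Qed.

Lemma eps_star_2 B : -1 < B -> eps_star 2 B = 2 / (exp 1 * (1 + B)).
Proof.
  intros HB. unfold eps_star.
  replace (Ropp 2 / 2) with (- (1)) by field. rewrite exp_Ropp.
  field. split; [lra | apply Rgt_not_eq, exp_pos].
Qed.

Lemma c_star_pos c B eps : 0 < c -> -1 < B -> 0 <= eps -> eps < eps_star c B ->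
  0 < c_star c B eps.
Proof.
  intros Hc HB Heps Hlt. unfold eps_star in Hlt. unfold c_star.
  set (y := c * exp (- c / 2)) in *.
  assert (Hy : eps * (1 + B) < y).
  { apply Rmult_lt_compat_r with (r := 1 + B) in Hlt; [| lra].
    replace (y / (1 + B) * (1 + B)) with y in Hlt by (field; lra). exact Hlt. }
  assert (Hy2 : exp c / c * y ^ 2 = c).
  { unfold y. replace (exp c / c * (c * exp (- c / 2)) ^ 2)
      with (c * (exp c * (exp (- c / 2) * exp (- c / 2)))) by (field; lra).
    rewrite <- !exp_plus. replace (c + (- c / 2 + - c / 2)) with 0 by field.
    rewrite exp_0. ring. }
  assert (Hsq : (eps * (1 + B)) ^ 2 < y ^ 2).
  { assert (0 <= eps * (1 + B)) by (apply Rmult_le_pos; lra). nra. }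
  assert (Hlt' : exp c / c * (eps * (1 + B)) ^ 2 < exp c / c * y ^ 2).
  { apply Rmult_lt_compat_l; [apply Rdiv_lt_0_compat; [apply exp_pos | exact Hc] | exact Hsq]. }
  replace (exp c / c * eps ^ 2 * (1 + B) ^ 2) with (exp c / c * (eps * (1 + B)) ^ 2) by ring.
  lra.
Qed.

Theorem lemma2 :
  forall B : R, 0 < B ->
  (forall c : R, 0 < c ->
    forall (beta k khat : R -> R) (eps : R) (w : R -> R -> R),
      lipschitz_on01 beta ->
      sup_le_on01 beta B ->
      is_bs_kernel beta k ->
      cont_on01 khat ->
      (forall x, 0 <= x <= 1 -> Rabs (k x - khat x) < eps) ->
      0 < eps -> eps < eps_star c B ->
      is_target_solution (delta_fun beta k khat) w ->
      0 < c_star c B eps /\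
      forall t, 0 <= t -> Vfun c w t <= Vfun c w 0 * exp (- c_star c B eps * t))
  /\ (forall c : R, 0 < c -> eps_star c B <= eps_star 2 B)
  /\ eps_star 2 B = 2 / (exp 1 * (1 + B)).
Proof.
  intros B HB. split; [| split].
  - intros c Hc beta k khat eps w Hbeta Hsup [Hk _] Hkhat Hclose Heps Heps_star Hsol.
    split; [apply c_star_pos; lra |].
    apply decay_of_differential_inequality
      with (dV := fun t =>
              RInt (fun x => exp (c * x) * (2 * w x t * Derive (fun s => w x s) t)) 0 1).
    + intro t. apply is_derive_Vfun, Hsol.
    + intros t Ht. unfold c_star.
      replace (exp c / c * eps ^ 2 * (1 + B) ^ 2) with (exp c / c * (eps * (1 + B)) ^ 2) by ring.
      apply Vfun_dissipation with (delta := delta_fun beta k khat);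
        [exact Hc | | exact Hsol | exact Ht].
      intros x Hx. apply delta_fun_bound; try assumption.
      intros y Hy. apply Rlt_le, Hclose, Hy.
  - intros c _. apply eps_star_le_eps_star_2. lra.
  - apply eps_star_2. lra.
Qed.
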